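(* Consider problem (PI): minimize $f(x)$ subject to $x\in X$, $g_i(x)\le 0$, $i=1,\dots,m$, where $\Gamma\subseteq\mathbb R^n$ is an open convex set and $X\subseteq\Gamma$ is convex. Let $\bar S$ be its solution set and $\bar x\in\bar S$. Assume $f:\Gamma\to\mathbb R$ is continuously differentiable and quasiconvex on $\Gamma$, $g_i$ for $i\in I(\bar x)$ are differentiable and quasiconvex on $\Gamma$, $g_i$ for $i\notin I(\bar x)$ are continuous at $\bar x$, $\nabla f(\bar x)\ne 0$, GMFCQ holds at $\bar x$, and $\lambda$ is a (fixed) KKT multiplier at $\bar x$. Define \[ \begin{aligned} S_1'(\lambda)&:=\{x\in X_1(\lambda)\mid \nabla f(x)^T(\bar x-x)=0,\ \nabla f(x)\ne0\},\\ S_2'(\lambda)&:=\{x\in X_1(\lambda)\mid \nabla f(x)^T(\bar x-x)\ge0,\ \nabla f(x)\ne0\},\\ S_3'(\lambda)&:=\{x\in X_1(\lambda)\mid \nabla f(x)^T(\bar x-x)=\nabla f(\bar x)^T(x-\bar x),\ \nabla f(x)\ne0\},\\ S_4'(\lambda)&:=\{x\in X_1(\lambda)\mid \nabla f(x)^T(\bar x-x)\ge\nabla f(\bar x)^T(x-\bar x),\ \nabla f(x)\ne0\},\\ S_5'(\lambda)&:=\{x\in X_1(\lambda)\mid \nabla f(x)^T(\bar x-x)=\nabla f(\bar x)^T(x-\bar x)=0,\ \nabla f(x)\ne0\}. \end{aligned} \] Then $\bar S=S_1'(\lambda)=S_2'(\lambda)=S_3'(\lambda)=S_4'(\lambda)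=S_5'(\lambda)$.
   Context: Quasiconvexity on $\Gamma$: $f(x+t(y-x))\le\max\{f(x),f(y)\}$ for all $x,y\in\Gamma$, $t\in[0,1]$. Feasible set $S:=\{x\in X\mid g_i(x)\le0,\ i=1,\dots,m\}$; $\bar S$ the set of global minimizers of $f$ on $S$. Active index set $I(x):=\{i\mid g_i(x)=0\}$. For a cone $C$, its negative polar is $C^*:=\{x\in\mathbb R^n\mid c^Tx\le 0\ \forall c\in C\}$; $T_X(x)$ is the tangent cone of $X$ at $x$ and $N_X(x):=(T_X(x))^*$ is the normal cone. GMFCQ holds at $\bar x$ iff there is $y\in (N_X(\bar x))^*$ with $\nabla g_i(\bar x)^Ty<0$ for all $i\in I(\bar x)$. A KKT multiplier at $\bar x$ is $\lambda\in\mathbb R^m$ with $\lambda_i\ge0$ for all $i$, $\lambda_ig_i(\bar x)=0$ for all $i$, and $\big[\nabla f(\bar x)+\sum_{i\in I(\bar x)}\lambda_i\nabla g_i(\bar x)\big]^T(x-\bar x)\ge0$ for all $x\in X$. Define $\tilde I(\bar x,\lambda):=\{i\mid g_i(\bar x)=0,\ \lambda_i>0\}$ and $X_1(\lambda):=\{x\in X\mid g_i(x)=0\ \forall i\in\tilde I(\bar x,\lambda),\ g_i(x)\le0\ \forall i\notin\tilde I(\bar x,\lambda)\}$. *)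

From Stdlib Require Import Reals List.
From Stdlib Require Fin.
Open Scope R_scope.

Definition vec (n : nat) := Fin.t n -> R.

Definition vzero {n} : vec n := fun _ => 0.
Definition vadd {n} (x y : vec n) : vec n := fun i => x i + y i.
Definition vsub {n} (x y : vec n) : vec n := fun i => x i - y i.
Definition vscal {n} (t : R) (x : vec n) : vec n := fun i => t * x i.

Fixpoint dot (n : nat) : vec n -> vec n -> R :=
  match n return vec n -> vec n -> R with
  | O => fun _ _ => 0
  | S k => fun x y => x Fin.F1 * y Fin.F1
                      + dot k (fun i => x (Fin.FS i)) (fun i => y (Fin.FS i))
  end.
Arguments dot {n} x y.

Definition norm {n} (x : vec n) : R := sqrt (dot x x).

Definition is_open {n} (G : vec n -> Prop) : Prop :=
  forall x, G x -> exists eps, eps > 0 /\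
    forall y, norm (vsub y x) < eps -> G y.

Definition is_convex {n} (C : vec n -> Prop) : Prop :=
  forall x y t, C x -> C y -> 0 <= t <= 1 -> C (vadd x (vscal t (vsub y x))).

Definition quasiconvex_on {n} (G : vec n -> Prop) (f : vec n -> R) : Prop :=
  forall x y t, G x -> G y -> 0 <= t <= 1 ->
    f (vadd x (vscal t (vsub y x))) <= Rmax (f x) (f y).

Definition has_grad {n} (f : vec n -> R) (x g : vec n) : Prop :=
  forall eps, eps > 0 -> exists delta, delta > 0 /\
    forall y, norm (vsub y x) < delta ->
      Rabs (f y - f x - dot g (vsub y x)) <= eps * norm (vsub y x).

Definition cont_at {n} (f : vec n -> R) (x : vec n) : Prop :=
  forall eps, eps > 0 -> exists delta, delta > 0 /\
    forall y, norm (vsub y x) < delta -> Rabs (f y - f x) < eps.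

Definition vcont_at {n} (F : vec n -> vec n) (x : vec n) : Prop :=
  forall eps, eps > 0 -> exists delta, delta > 0 /\
    forall y, norm (vsub y x) < delta -> norm (vsub (F y) (F x)) < eps.

Definition seq_cv {n} (u : nat -> vec n) (l : vec n) : Prop :=
  forall eps, eps > 0 -> exists N, forall k, (N <= k)%nat -> norm (vsub (u k) l) < eps.

Definition tangent_cone {n} (X : vec n -> Prop) (x : vec n) : vec n -> Prop :=
  fun d => exists (xs : nat -> vec n) (ts : nat -> R),
    (forall k, X (xs k)) /\ (forall k, ts k > 0) /\ Un_cv ts 0 /\
    seq_cv (fun k => vscal (/ ts k) (vsub (xs k) x)) d.

Definition polar {n} (C : vec n -> Prop) : vec n -> Prop :=
  fun y => forall c, C c -> dot c y <= 0.

Definition normal_cone {n} (X : vec n -> Prop) (x : vec n) : vec n -> Prop :=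
  polar (tangent_cone X x).

(* constraints g_0, ..., g_{m-1} (0-based indexing of g_1..g_m) *)
Definition feasible {n} (X : vec n -> Prop) (m : nat) (g : nat -> vec n -> R)
  : vec n -> Prop :=
  fun x => X x /\ forall i, (i < m)%nat -> g i x <= 0.

Definition minimizers {n} (f : vec n -> R) (X : vec n -> Prop) (m : nat)
  (g : nat -> vec n -> R) : vec n -> Prop :=
  fun x => feasible X m g x /\ forall y, feasible X m g y -> f x <= f y.

Definition active {n} (m : nat) (g : nat -> vec n -> R) (x : vec n) (i : nat) : Prop :=
  (i < m)%nat /\ g i x = 0.

Definition GMFCQ {n} (X : vec n -> Prop) (m : nat) (g : nat -> vec n -> R)
  (grad_g : nat -> vec n -> vec n) (xb : vec n) : Prop :=
  exists y, polar (normal_cone X xb) y /\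
    forall i, active m g xb i -> dot (grad_g i xb) y < 0.

Definition active_sum {n} (m : nat) (g : nat -> vec n -> R)
  (grad_g : nat -> vec n -> vec n) (lam : nat -> R) (xb : vec n) : vec n :=
  fold_right (fun i acc =>
      if Req_EM_T (g i xb) 0 then vadd (vscal (lam i) (grad_g i xb)) acc else acc)
    vzero (seq 0 m).

Definition KKT_multiplier {n} (X : vec n -> Prop) (grad_f : vec n -> vec n)
  (m : nat) (g : nat -> vec n -> R) (grad_g : nat -> vec n -> vec n)
  (xb : vec n) (lam : nat -> R) : Prop :=
  (forall i, (i < m)%nat -> lam i >= 0) /\
  (forall i, (i < m)%nat -> lam i * g i xb = 0) /\
  (forall x, X x ->
     dot (vadd (grad_f xb) (active_sum m g grad_g lam xb)) (vsub x xb) >= 0).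

Definition active_pos {n} (m : nat) (g : nat -> vec n -> R) (xb : vec n)
  (lam : nat -> R) (i : nat) : Prop :=
  (i < m)%nat /\ g i xb = 0 /\ lam i > 0.

Definition X1 {n} (X : vec n -> Prop) (m : nat) (g : nat -> vec n -> R)
  (xb : vec n) (lam : nat -> R) : vec n -> Prop :=
  fun x => X x /\
    (forall i, active_pos m g xb lam i -> g i x = 0) /\
    (forall i, (i < m)%nat -> ~ active_pos m g xb lam i -> g i x <= 0).

(* A minimizer x has f x = f xb, and stationarity of xb together with quasiconvexity
   gives grad f(xb).(x - xb) = 0; a positive multiplier then keeps its constraint
   active at x, since a strict decrease of the quasiconvex g_j would break stationarity.
   As grad f(xb) <> 0, f cannot dip below f xb on the segment [xb, x] (that would need a
   descent direction orthogonal to grad f(xb)), so f is constant there: hence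
   grad f(x).(xb - x) = 0, and grad f(x) cannot vanish, for a zero gradient would
   propagate along the whole segment and, by continuity of grad f, reach xb.
   Conversely, if grad f(x) <> 0 and grad f(x).(xb - x) >= 0, then f xb < f x is
   impossible, because a quasiconvex function strictly decreases only in directions
   making an obtuse angle with a nonzero gradient. *)

From Stdlib Require Import Reals List Lra Lia Classical FunctionalExtensionality.
Open Scope R_scope.

Ltac vec_ext :=
  apply functional_extensionality; intro; unfold vsub, vadd, vscal, vzero; ring.

Lemma dot_comm n : forall a b : vec n, dot a b = dot b a.
Proof.
  induction n as [|n IH]; intros a b; simpl; [ring|].
  rewrite IH; ring.
Qed.

Lemma dot_add_l n : forall a b c : vec n, dot (vadd a b) c = dot a c + dot b c.
Proof.
  induction n as [|n IH]; intros a b c; simpl; [ring|].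
  specialize (IH (fun i => a (Fin.FS i)) (fun i => b (Fin.FS i)) (fun i => c (Fin.FS i))).
  unfold vadd in *; rewrite IH; ring.
Qed.

Lemma dot_scal_l n s : forall a b : vec n, dot (vscal s a) b = s * dot a b.
Proof.
  induction n as [|n IH]; intros a b; simpl; [ring|].
  specialize (IH (fun i => a (Fin.FS i)) (fun i => b (Fin.FS i))).
  unfold vscal in *; rewrite IH; ring.
Qed.

Lemma dot_zero_l n : forall a : vec n, dot vzero a = 0.
Proof.
  induction n as [|n IH]; intros a; simpl; [ring|].
  specialize (IH (fun i => a (Fin.FS i))).
  unfold vzero in *; rewrite IH; ring.
Qed.

Lemma dot_add_r n (a b c : vec n) : dot a (vadd b c) = dot a b + dot a c.
Proof. rewrite !(dot_comm _ a); apply dot_add_l. Qed.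

Lemma dot_scal_r n s (a b : vec n) : dot a (vscal s b) = s * dot a b.
Proof. rewrite !(dot_comm _ a); apply dot_scal_l. Qed.

Lemma dot_self_nonneg n : forall a : vec n, 0 <= dot a a.
Proof.
  induction n as [|n IH]; intros a; simpl; [lra|].
  specialize (IH (fun i => a (Fin.FS i))); nra.
Qed.

Lemma dot_self_eq0 n : forall a : vec n, dot a a = 0 -> a = vzero.
Proof.
  induction n as [|n IH]; intros a Ha; apply functional_extensionality.
  - intro i; exact (Fin.case0 (fun i => a i = vzero i) i).
  - simpl in Ha.
    pose proof (dot_self_nonneg n (fun i => a (Fin.FS i))).
    assert (a Fin.F1 = 0) by nra.
    assert (Htl : (fun i => a (Fin.FS i)) = vzero) by (apply IH; nra).
    intro i; refine (Fin.caseS' i (fun i => a i = vzero i) _ _); auto.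
    intro j; exact (equal_f Htl j).
Qed.

Lemma dot_self_pos n (a : vec n) : a <> vzero -> 0 < dot a a.
Proof.
  intro Ha; destruct (dot_self_nonneg n a) as [Hpos|Hzero]; [exact Hpos|].
  exfalso; apply Ha, dot_self_eq0; auto.
Qed.

Lemma norm_nonneg n (a : vec n) : 0 <= norm a.
Proof. apply sqrt_pos. Qed.

Lemma norm_pos n (a : vec n) : a <> vzero -> 0 < norm a.
Proof. intro Ha; apply sqrt_lt_R0, dot_self_pos, Ha. Qed.

Lemma norm_scal n s (a : vec n) : norm (vscal s a) = Rabs s * norm a.
Proof.
  unfold norm; rewrite dot_scal_l, dot_scal_r, <- Rmult_assoc.
  rewrite sqrt_mult_alt by nra.
  rewrite <- sqrt_Rsqr_abs; reflexivity.
Qed.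

Lemma Rmult_lt_of_lt_div a b c : 0 < c -> a < b / c -> a * c < b.
Proof.
  intros Hc H; apply (Rmult_lt_compat_r c) in H; [|exact Hc].
  unfold Rdiv in H; rewrite Rmult_assoc, Rinv_l, Rmult_1_r in H; lra.
Qed.

Lemma ray_sub n (x d : vec n) s : vsub (vadd x (vscal s d)) x = vscal s d.
Proof. vec_ext. Qed.

Lemma norm_ray n (x d : vec n) s :
  0 <= s -> norm (vsub (vadd x (vscal s d)) x) = s * norm d.
Proof. intro Hs; rewrite ray_sub, norm_scal, Rabs_right; lra. Qed.

Lemma ball_ray n (P : vec n -> Prop) (x d : vec n) r :
  r > 0 -> (forall y, norm (vsub y x) < r -> P y) ->
  exists delta, delta > 0 /\ forall s, 0 <= s < delta -> P (vadd x (vscal s d)).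
Proof.
  intros Hr Hball; pose proof (norm_nonneg n d).
  exists (r / (norm d + 1)); split; [apply Rdiv_lt_0_compat; lra|].
  intros s [Hs0 Hs]; apply Hball; rewrite norm_ray by exact Hs0.
  apply Rmult_lt_of_lt_div in Hs; nra.
Qed.

Lemma open_ray n (G : vec n -> Prop) (x d : vec n) :
  is_open G -> G x ->
  exists delta, delta > 0 /\ forall s, 0 <= s < delta -> G (vadd x (vscal s d)).
Proof.
  intros HG Hx; destruct (HG x Hx) as [r [Hr Hball]].
  exact (ball_ray n G x d r Hr Hball).
Qed.

Lemma has_grad_ray n (f : vec n -> R) (x gx d : vec n) eps :
  has_grad f x gx -> eps > 0 ->
  exists delta, delta > 0 /\ forall s, 0 <= s < delta ->
    - (eps * s) <= f (vadd x (vscal s d)) - f x - s * dot gx d <= eps * s.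
Proof.
  intros Hg Heps; pose proof (norm_nonneg n d).
  destruct (Hg (eps / (norm d + 1))) as [r [Hr Hball]];
    [apply Rdiv_lt_0_compat; lra|].
  destruct (ball_ray n _ x d r Hr Hball) as [delta [Hdelta Hray]].
  exists delta; split; [exact Hdelta|]; intros s Hs.
  specialize (Hray s Hs); rewrite norm_ray, ray_sub, dot_scal_r in Hray by apply Hs.
  set (e := f (vadd x (vscal s d)) - f x - s * dot gx d) in *.
  assert (Hbound : eps / (norm d + 1) * (s * norm d) <= eps * s).
  { assert (Hgap : eps * s - eps / (norm d + 1) * (s * norm d) = eps * s / (norm d + 1))
      by (field; lra).
    assert (0 <= eps * s / (norm d + 1)).
    { apply Rmult_le_pos; [nra|apply Rlt_le, Rinv_0_lt_compat; lra]. }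
    lra. }
  pose proof (Rle_abs e); pose proof (Rle_abs (- e)); rewrite Rabs_Ropp in *; lra.
Qed.

Lemma exists_pos_below d1 d2 : 0 < d1 -> 0 < d2 -> exists s, 0 < s /\ s < d1 /\ s < d2.
Proof.
  intros H1 H2; exists (Rmin d1 d2 / 2).
  pose proof (Rmin_l d1 d2); pose proof (Rmin_r d1 d2); pose proof (Rmin_pos d1 d2 H1 H2).
  lra.
Qed.

Lemma has_grad_ray_increase n (f : vec n -> R) (x gx d : vec n) :
  has_grad f x gx -> dot gx d > 0 ->
  exists delta, delta > 0 /\ forall s, 0 < s < delta -> f x < f (vadd x (vscal s d)).
Proof.
  intros Hg Hd.
  destruct (has_grad_ray n f x gx d (dot gx d / 2) Hg) as [delta [Hdelta Hray]]; [lra|].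
  exists delta; split; [exact Hdelta|]; intros s Hs.
  specialize (Hray s (conj (Rlt_le _ _ (proj1 Hs)) (proj2 Hs))); nra.
Qed.

Lemma has_grad_ray_cont n (f : vec n -> R) (x gx d : vec n) eps :
  has_grad f x gx -> eps > 0 ->
  exists delta, delta > 0 /\ forall s, 0 <= s < delta ->
    Rabs (f (vadd x (vscal s d)) - f x) < eps.
Proof.
  intros Hg Heps; set (c := Rabs (dot gx d) + 1).
  assert (Hc : 0 < c) by (pose proof (Rabs_pos (dot gx d)); unfold c; lra).
  destruct (has_grad_ray n f x gx d 1 Hg) as [delta [Hdelta Hray]]; [lra|].
  destruct (exists_pos_below delta (eps / c) Hdelta) as [delta' [Hpos [Hlt Hlt_eps]]];
    [apply Rdiv_lt_0_compat; lra|].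
  exists delta'; split; [exact Hpos|]; intros s Hs.
  specialize (Hray s (conj (proj1 Hs) (Rlt_trans _ _ _ (proj2 Hs) Hlt))).
  assert (Hsc : s * c < eps) by (apply Rmult_lt_of_lt_div; lra).
  pose proof (Rle_abs (dot gx d)); pose proof (Rle_abs (- dot gx d)).
  rewrite Rabs_Ropp in *; unfold c in Hsc.
  apply Rabs_def1; nra.
Qed.

Lemma has_grad_ray_flat n (f : vec n -> R) (x gx d : vec n) r :
  has_grad f x gx -> r > 0 ->
  (forall s, 0 <= s <= r -> f (vadd x (vscal s d)) = f x) -> dot gx d = 0.
Proof.
  intros Hg Hr Hflat; set (D := dot gx d).
  destruct (Req_dec D 0) as [|HD]; [assumption|exfalso].
  pose proof (Rabs_pos_lt D HD) as HabsD.
  destruct (has_grad_ray n f x gx d (Rabs D / 2) Hg) as [delta [Hdelta Hray]]; [lra|].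
  destruct (exists_pos_below delta r Hdelta Hr) as [s [Hs0 [Hs1 Hs2]]].
  specialize (Hray s (conj (Rlt_le _ _ Hs0) Hs1)).
  rewrite Hflat in Hray by lra; fold D in Hray.
  destruct (Rcase_abs D); [rewrite Rabs_left in *|rewrite Rabs_right in *]; nra.
Qed.

Lemma quasiconvex_grad_nonpos n (G : vec n -> Prop) (h : vec n -> R) (y z gy : vec n) :
  quasiconvex_on G h -> G y -> G z -> has_grad h y gy -> h z <= h y ->
  dot gy (vsub z y) <= 0.
Proof.
  intros Hq Hy Hz Hg Hle.
  destruct (Rle_dec (dot gy (vsub z y)) 0) as [|Hpos]; [assumption|exfalso].
  destruct (has_grad_ray_increase n h y gy (vsub z y) Hg) as [delta [Hdelta Hinc]];
    [lra|].
  destruct (exists_pos_below delta 1 Hdelta) as [s [Hs0 [Hs1 Hs2]]]; [lra|].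
  pose proof (Hq y z s Hy Hz (conj (Rlt_le _ _ Hs0) (Rlt_le _ _ Hs2))) as Hmax.
  rewrite Rmax_left in Hmax by exact Hle.
  specialize (Hinc s (conj Hs0 Hs1)); lra.
Qed.

Lemma quasiconvex_grad_neg n (G : vec n -> Prop) (h : vec n -> R) (y z gy gz : vec n) :
  is_open G -> quasiconvex_on G h -> G y -> G z ->
  has_grad h y gy -> has_grad h z gz -> gy <> vzero -> h z < h y ->
  dot gy (vsub z y) < 0.
Proof.
  intros HG Hq Hy Hz Hgy Hgz Hgy0 Hlt.
  destruct (open_ray n G z gy HG Hz) as [delta1 [Hdelta1 Hin]].
  destruct (has_grad_ray_cont n h z gz gy (h y - h z) Hgz) as [delta2 [Hdelta2 Hcont]];
    [lra|].
  destruct (exists_pos_below delta1 delta2 Hdelta1 Hdelta2) as [s [Hs0 [Hs1 Hs2]]].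
  set (z' := vadd z (vscal s gy)).
  assert (Hlt' : h z' < h y).
  { pose proof (Hcont s (conj (Rlt_le _ _ Hs0) Hs2)) as Hc.
    apply Rabs_def2 in Hc; unfold z'; lra. }
  pose proof (quasiconvex_grad_nonpos n G h y z' gy Hq Hy
                (Hin s (conj (Rlt_le _ _ Hs0) Hs1)) Hgy (Rlt_le _ _ Hlt')) as Hle.
  replace (vsub z' y) with (vadd (vsub z y) (vscal s gy)) in Hle by (unfold z'; vec_ext).
  rewrite dot_add_r, dot_scal_r in Hle.
  pose proof (dot_self_pos n gy Hgy0); nra.
Qed.

(* Push q along gz / t: by quasiconvexity the point z + s gz stays below
   max (f p, f (q + s gz / t)) = f z + o(s), whereas a nonzero gz makes it rise
   by about s |gz|^2. *)
Lemma quasiconvex_grad_vanishes n (G : vec n -> Prop) (f : vec n -> R) (p q gz : vec n) t :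
  is_open G -> quasiconvex_on G f -> G p -> G q -> 0 < t <= 1 ->
  has_grad f q vzero -> has_grad f (vadd p (vscal t (vsub q p))) gz ->
  f p <= f (vadd p (vscal t (vsub q p))) -> f q <= f (vadd p (vscal t (vsub q p))) ->
  gz = vzero.
Proof.
  intros HG Hq Hp HqG Ht Hgq Hgz Hfp Hfq.
  set (z := vadd p (vscal t (vsub q p))) in *.
  destruct (classic (gz = vzero)) as [|Hgz0]; [assumption|exfalso].
  pose proof (dot_self_pos n gz Hgz0) as HN; set (N := dot gz gz) in *.
  set (dq := vscal (/ t) gz).
  destruct (has_grad_ray n f z gz gz (N / 2) Hgz) as [d1 [Hd1 Hrise]]; [lra|].
  destruct (has_grad_ray n f q vzero dq (N / 4) Hgq) as [d2 [Hd2 Hflat]]; [lra|].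
  destruct (open_ray n G q dq HG HqG) as [d3 [Hd3 Hin]].
  destruct (exists_pos_below d2 d3 Hd2 Hd3) as [s1 [Hs1 [Hs12 Hs13]]].
  destruct (exists_pos_below d1 s1 Hd1 Hs1) as [s [Hs [Hs1' Hss1]]].
  set (q' := vadd q (vscal s dq)).
  assert (Hmid : vadd p (vscal t (vsub q' p)) = vadd z (vscal s gz)).
  { apply functional_extensionality; intro i.
    unfold q', dq, z, vadd, vscal, vsub; field; lra. }
  pose proof (Hq p q' t Hp (Hin s ltac:(lra)) ltac:(lra)) as Hmax.
  rewrite Hmid in Hmax.
  specialize (Hrise s ltac:(lra)); specialize (Hflat s ltac:(lra)).
  rewrite dot_zero_l in Hflat; fold N in Hrise.
  pose proof (Rmax_lub (f p) (f q') (f z + N / 4 * s) ltac:(lra) ltac:(unfold q'; lra)).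
  nra.
Qed.

Section LevelSegment.

Variables (n : nat) (G : vec n -> Prop) (f : vec n -> R) (grad_f : vec n -> vec n)
  (xb x : vec n).
Hypotheses (HGo : is_open G) (HGc : is_convex G) (Hq : quasiconvex_on G f)
  (Hgrad : forall y, G y -> has_grad f y (grad_f y))
  (Hxb : G xb) (Hx : G x) (Hgxb : grad_f xb <> vzero)
  (Hlevel : f x = f xb) (Hdir : dot (grad_f xb) (vsub x xb) = 0).

Lemma level_segment t : 0 <= t <= 1 -> f (vadd xb (vscal t (vsub x xb))) = f xb.
Proof.
  intro Ht; set (z := vadd xb (vscal t (vsub x xb))).
  assert (Hz : G z) by (apply HGc; assumption).
  pose proof (Hq xb x t Hxb Hx Ht) as Hmax; fold z in Hmax.
  rewrite Rmax_left in Hmax by lra.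
  destruct (Rlt_dec (f z) (f xb)) as [Hlt|]; [exfalso|lra].
  pose proof (quasiconvex_grad_neg n G f xb z _ _ HGo Hq Hxb Hz
                (Hgrad xb Hxb) (Hgrad z Hz) Hgxb Hlt) as Hneg.
  unfold z in Hneg; rewrite ray_sub, dot_scal_r, Hdir in Hneg; lra.
Qed.

Lemma level_grad_orth : dot (grad_f x) (vsub xb x) = 0.
Proof.
  apply (has_grad_ray_flat n f x _ _ 1 (Hgrad x Hx)); [lra|]; intros s Hs.
  replace (vadd x (vscal s (vsub xb x))) with (vadd xb (vscal (1 - s) (vsub x xb)))
    by vec_ext.
  rewrite level_segment, Hlevel by lra; reflexivity.
Qed.

Hypothesis Hcont : vcont_at grad_f xb.

Lemma level_grad_nonzero : grad_f x <> vzero.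
Proof.
  intro Hgx0.
  assert (Hseg : forall t, 0 < t <= 1 -> grad_f (vadd xb (vscal t (vsub x xb))) = vzero).
  { intros t Ht.
    assert (Hz : G (vadd xb (vscal t (vsub x xb)))) by (apply HGc; auto; lra).
    apply (quasiconvex_grad_vanishes n G f xb x _ t HGo Hq Hxb Hx Ht);
      [rewrite <- Hgx0; apply Hgrad, Hx | apply Hgrad, Hz | ..];
      rewrite level_segment; lra. }
  destruct (Hcont (norm (grad_f xb)) (norm_pos n _ Hgxb)) as [r [Hr Hball]].
  destruct (ball_ray n _ xb (vsub x xb) r Hr Hball) as [delta [Hdelta Hnear]].
  destruct (exists_pos_below delta 1 Hdelta) as [t [Ht0 [Ht1 Ht2]]]; [lra|].
  specialize (Hnear t ltac:(lra)); rewrite Hseg in Hnear by lra.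
  replace (vsub vzero (grad_f xb)) with (vscal (-1) (grad_f xb)) in Hnear by vec_ext.
  rewrite norm_scal, Rabs_left in Hnear; lra.
Qed.

End LevelSegment.

Definition active_sum_over {n} (g : nat -> vec n -> R) (grad_g : nat -> vec n -> vec n)
  (lam : nat -> R) (xb : vec n) (l : list nat) : vec n :=
  fold_right (fun i acc =>
      if Req_EM_T (g i xb) 0 then vadd (vscal (lam i) (grad_g i xb)) acc else acc)
    vzero l.

Lemma active_sum_over_seq n m g grad_g lam (xb : vec n) :
  active_sum m g grad_g lam xb = active_sum_over g grad_g lam xb (seq 0 m).
Proof. reflexivity. Qed.

Section ActiveSum.

Variables (n : nat) (g : nat -> vec n -> R) (grad_g : nat -> vec n -> vec n)
  (lam : nat -> R) (xb v : vec n).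

Lemma dot_active_sum_over_nonpos l :
  (forall i, In i l -> g i xb = 0 -> lam i * dot (grad_g i xb) v <= 0) ->
  dot (active_sum_over g grad_g lam xb l) v <= 0.
Proof.
  induction l as [|i l IH]; intros Hterm; simpl; [rewrite dot_zero_l; lra|].
  specialize (IH (fun j Hj => Hterm j (or_intror Hj))).
  destruct (Req_EM_T (g i xb) 0) as [Hi|]; [|exact IH].
  rewrite dot_add_l, dot_scal_l.
  pose proof (Hterm i (or_introl eq_refl) Hi); lra.
Qed.

Lemma dot_active_sum_over_le_term l j :
  (forall i, In i l -> g i xb = 0 -> lam i * dot (grad_g i xb) v <= 0) ->
  In j l -> g j xb = 0 ->
  dot (active_sum_over g grad_g lam xb l) v <= lam j * dot (grad_g j xb) v.
Proof.
  induction l as [|i l IH]; intros Hterm Hj Hgj; [destruct Hj|simpl].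
  assert (Htl : forall k, In k l -> g k xb = 0 -> lam k * dot (grad_g k xb) v <= 0)
    by (intros k Hk; apply Hterm; right; exact Hk).
  destruct (Req_EM_T (g i xb) 0) as [Hi|Hi].
  - rewrite dot_add_l, dot_scal_l.
    pose proof (Hterm i (or_introl eq_refl) Hi).
    destruct (Nat.eq_dec i j) as [<-|Hij].
    + pose proof (dot_active_sum_over_nonpos l Htl); lra.
    + destruct Hj as [->|Hj]; [congruence|].
      specialize (IH Htl Hj Hgj); lra.
  - destruct Hj as [->|Hj]; [contradiction|].
    exact (IH Htl Hj Hgj).
Qed.

End ActiveSum.

Lemma X1_feasible n (X : vec n -> Prop) m g (xb : vec n) lam y :
  X1 X m g xb lam y -> feasible X m g y.
Proof.
  intros [HX [Hpos Hrest]]; split; [exact HX|]; intros i Hi.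
  destruct (classic (active_pos m g xb lam i)) as [Hai|Hai];
    [rewrite Hpos by exact Hai; lra|exact (Hrest i Hi Hai)].
Qed.

Lemma GMFCQ_active_grad_nonzero n (X : vec n -> Prop) m g grad_g (xb : vec n) i :
  GMFCQ X m g grad_g xb -> active m g xb i -> grad_g i xb <> vzero.
Proof.
  intros [y [_ Hy]] Hi Hzero; specialize (Hy i Hi).
  rewrite Hzero, dot_zero_l in Hy; lra.
Qed.

Section KKTPoint.

Variables (n m : nat) (Gamma X : vec n -> Prop) (grad_f : vec n -> vec n)
  (g : nat -> vec n -> R) (grad_g : nat -> vec n -> vec n) (xb : vec n) (lam : nat -> R).
Hypotheses (HXG : forall x, X x -> Gamma x) (Hxb : feasible X m g xb)
  (Hact : forall i, active m g xb i ->
     (forall x, Gamma x -> has_grad (g i) x (grad_g i x)) /\ quasiconvex_on Gamma (g i))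
  (HKKT : KKT_multiplier X grad_f m g grad_g xb lam).

Lemma kkt_active_terms_nonpos y :
  feasible X m g y -> forall i, In i (seq 0 m) -> g i xb = 0 ->
  lam i * dot (grad_g i xb) (vsub y xb) <= 0.
Proof.
  intros Hy i Hi Hi0; assert (Him : (i < m)%nat) by (apply in_seq in Hi; lia).
  destruct (Hact i (conj Him Hi0)) as [Hgrad Hq].
  destruct HKKT as [Hlam _].
  assert (dot (grad_g i xb) (vsub y xb) <= 0).
  { apply (quasiconvex_grad_nonpos n Gamma (g i));
      [exact Hq|apply HXG, Hxb|apply HXG, Hy|apply Hgrad, HXG, Hxb|].
    rewrite Hi0; exact (proj2 Hy i Him). }
  pose proof (Hlam i Him); nra.
Qed.

Lemma kkt_grad_dir_nonneg y : feasible X m g y -> dot (grad_f xb) (vsub y xb) >= 0.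
Proof.
  intros Hy; destruct HKKT as [_ [_ Hstat]].
  pose proof (Hstat y (proj1 Hy)) as Hs; rewrite dot_add_l in Hs.
  pose proof (dot_active_sum_over_nonpos n g grad_g lam xb (vsub y xb) (seq 0 m)
                (kkt_active_terms_nonpos y Hy)).
  rewrite active_sum_over_seq in Hs; lra.
Qed.

Lemma kkt_level_in_X1 x :
  is_open Gamma -> GMFCQ X m g grad_g xb ->
  feasible X m g x -> dot (grad_f xb) (vsub x xb) = 0 -> X1 X m g xb lam x.
Proof.
  intros HGo HGM Hx Hdir; split; [exact (proj1 Hx)|split].
  - intros j [Hjm [Hj0 Hlamj]].
    destruct (Req_dec (g j x) 0) as [|Hne]; [assumption|exfalso].
    assert (Hlt : g j x < g j xb) by (pose proof (proj2 Hx j Hjm); lra).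
    destruct (Hact j (conj Hjm Hj0)) as [Hgrad Hq].
    pose proof (quasiconvex_grad_neg n Gamma (g j) xb x _ _ HGo Hq
                  (HXG xb (proj1 Hxb)) (HXG x (proj1 Hx))
                  (Hgrad xb (HXG xb (proj1 Hxb))) (Hgrad x (HXG x (proj1 Hx)))
                  (GMFCQ_active_grad_nonzero n X m g grad_g xb j HGM (conj Hjm Hj0))
                  Hlt).
    pose proof (dot_active_sum_over_le_term n g grad_g lam xb (vsub x xb) (seq 0 m) j
                  (kkt_active_terms_nonpos x Hx) ltac:(apply in_seq; lia) Hj0).
    destruct HKKT as [_ [_ Hstat]].
    pose proof (Hstat x (proj1 Hx)) as Hs.
    rewrite dot_add_l, Hdir, active_sum_over_seq in Hs; nra.
  - intros i Hi _; exact (proj2 Hx i Hi).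
Qed.

End KKTPoint.

Section Minimizers.

Variables (n m : nat) (Gamma X : vec n -> Prop) (f : vec n -> R) (grad_f : vec n -> vec n)
  (g : nat -> vec n -> R) (grad_g : nat -> vec n -> vec n) (xb : vec n) (lam : nat -> R).
Hypotheses (HGo : is_open Gamma) (HGc : is_convex Gamma) (HXG : forall x, X x -> Gamma x)
  (Hmin : minimizers f X m g xb)
  (Hgrad : forall x, Gamma x -> has_grad f x (grad_f x))
  (Hq : quasiconvex_on Gamma f)
  (Hact : forall i, active m g xb i ->
     (forall x, Gamma x -> has_grad (g i) x (grad_g i x)) /\ quasiconvex_on Gamma (g i))
  (HKKT : KKT_multiplier X grad_f m g grad_g xb lam).

Lemma minimizer_of_X1 y :
  X1 X m g xb lam y -> grad_f y <> vzero -> dot (grad_f y) (vsub xb y) >= 0 ->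
  minimizers f X m g y.
Proof.
  intros HX1 Hgy Hdir; pose proof (X1_feasible n X m g xb lam y HX1) as Hy.
  destruct Hmin as [Hxb Hxb_min].
  assert (Hle : f y <= f xb).
  { destruct (Rle_dec (f y) (f xb)) as [|Hgt]; [assumption|exfalso].
    pose proof (quasiconvex_grad_neg n Gamma f y xb _ _ HGo Hq (HXG y (proj1 Hy))
                  (HXG xb (proj1 Hxb)) (Hgrad y (HXG y (proj1 Hy)))
                  (Hgrad xb (HXG xb (proj1 Hxb))) Hgy ltac:(lra)); lra. }
  split; [exact Hy|]; intros z Hz; specialize (Hxb_min z Hz); lra.
Qed.

Hypotheses (Hcont : forall x, Gamma x -> vcont_at grad_f x) (Hgxb : grad_f xb <> vzero)
  (HGM : GMFCQ X m g grad_g xb).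

Lemma minimizer_props x :
  minimizers f X m g x ->
  X1 X m g xb lam x /\ dot (grad_f x) (vsub xb x) = 0 /\
  dot (grad_f xb) (vsub x xb) = 0 /\ grad_f x <> vzero.
Proof.
  intros [Hx Hx_min]; destruct Hmin as [Hxb Hxb_min].
  pose proof (HXG x (proj1 Hx)) as Gx; pose proof (HXG xb (proj1 Hxb)) as Gxb.
  assert (Hlevel : f x = f xb)
    by (specialize (Hx_min xb Hxb); specialize (Hxb_min x Hx); lra).
  assert (Hdir : dot (grad_f xb) (vsub x xb) = 0).
  { pose proof (quasiconvex_grad_nonpos n Gamma f xb x _ Hq Gxb Gx (Hgrad xb Gxb)
                  ltac:(lra)).
    pose proof (kkt_grad_dir_nonneg n m Gamma X grad_f g grad_g xb lam HXG Hxb Hact HKKT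
                  x Hx).
    lra. }
  split; [|split; [|split]].
  - exact (kkt_level_in_X1 n m Gamma X grad_f g grad_g xb lam HXG Hxb Hact HKKT x
             HGo HGM Hx Hdir).
  - exact (level_grad_orth n Gamma f grad_f xb x HGo HGc Hq Hgrad Gxb Gx Hgxb Hlevel Hdir).
  - exact Hdir.
  - exact (level_grad_nonzero n Gamma f grad_f xb x HGo HGc Hq Hgrad Gxb Gx Hgxb Hlevel Hdir
             (Hcont xb Gxb)).
Qed.

End Minimizers.

Theorem theorem5 (n m : nat) (Gamma X : vec n -> Prop)
  (f : vec n -> R) (grad_f : vec n -> vec n)
  (g : nat -> vec n -> R) (grad_g : nat -> vec n -> vec n)
  (xb : vec n) (lam : nat -> R) :
  is_open Gamma -> is_convex Gamma ->
  (forall x, X x -> Gamma x) -> is_convex X ->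
  minimizers f X m g xb ->
  (forall x, Gamma x -> has_grad f x (grad_f x)) ->
  (forall x, Gamma x -> vcont_at grad_f x) ->
  quasiconvex_on Gamma f ->
  (forall i, active m g xb i ->
     (forall x, Gamma x -> has_grad (g i) x (grad_g i x)) /\
     quasiconvex_on Gamma (g i)) ->
  (forall i, (i < m)%nat -> ~ active m g xb i -> cont_at (g i) xb) ->
  grad_f xb <> vzero ->
  GMFCQ X m g grad_g xb ->
  KKT_multiplier X grad_f m g grad_g xb lam ->
  let S1 := fun x => X1 X m g xb lam x /\
              dot (grad_f x) (vsub xb x) = 0 /\ grad_f x <> vzero in
  let S2 := fun x => X1 X m g xb lam x /\
              dot (grad_f x) (vsub xb x) >= 0 /\ grad_f x <> vzero in
  let S3 := fun x => X1 X m g xb lam x /\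
              dot (grad_f x) (vsub xb x) = dot (grad_f xb) (vsub x xb) /\
              grad_f x <> vzero in
  let S4 := fun x => X1 X m g xb lam x /\
              dot (grad_f x) (vsub xb x) >= dot (grad_f xb) (vsub x xb) /\
              grad_f x <> vzero in
  let S5 := fun x => X1 X m g xb lam x /\
              dot (grad_f x) (vsub xb x) = dot (grad_f xb) (vsub x xb) /\
              dot (grad_f xb) (vsub x xb) = 0 /\
              grad_f x <> vzero in
  forall x,
    (minimizers f X m g x <-> S1 x) /\
    (minimizers f X m g x <-> S2 x) /\
    (minimizers f X m g x <-> S3 x) /\
    (minimizers f X m g x <-> S4 x) /\
    (minimizers f X m g x <-> S5 x).
Proof.
  intros HGo HGc HXG _ Hmin Hgrad Hcont Hq Hact _ Hgxb HGM HKKT; cbv zeta; intro x.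
  pose proof (minimizer_props n m Gamma X f grad_f g grad_g xb lam HGo HGc HXG Hmin
                Hgrad Hq Hact HKKT Hcont Hgxb HGM x) as Hfwd.
  pose proof (minimizer_of_X1 n m Gamma X f grad_f g xb lam HGo HXG Hmin
                Hgrad Hq x) as Hback.
  assert (HX1dir : X1 X m g xb lam x -> dot (grad_f xb) (vsub x xb) >= 0).
  { intro HX1; apply (kkt_grad_dir_nonneg n m Gamma X grad_f g grad_g xb lam HXG
                        (proj1 Hmin) Hact HKKT), (X1_feasible n X m g xb lam x HX1). }
  split; [|split; [|split; [|split]]]; (split;
    [ intros Hx; destruct (Hfwd Hx) as (HX1 & Horth & Hdir & Hnz);
      refine (conj HX1 _); intuition lra
    | intros [HX1 Hrest]; apply Hback; [exact HX1|tauto|];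
      decompose [and] Hrest; pose proof (HX1dir HX1); lra ]).
Qed.
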